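(* Let $\Gamma$ be a gain operator on $\ell^\infty_+(\mathcal I)$ satisfying the $\oplus$-MBI property, and define $\sigma_*:\mathbb R_+\to\ell^\infty_+(\mathcal I)$ by $\sigma_*(r):=\bigoplus_{n=0}^\infty\hat\Gamma^n(r\mathbf 1)$ (the minimal fixed point of $\Gamma^\oplus_{r\mathbf 1}$). Then: (a) if $\sigma_*(r)$ is the only fixed point of $\Gamma^\oplus_{r\mathbf 1}$ for each $r\ge0$, then every component function $\sigma_{*i}$, $i\in\mathcal I$, is continuous; in particular $\sigma_*$ is sequentially continuous in the weak$^*$-topology; (b) if $\sigma_*(r)$ is a globally attractive fixed point of $\Gamma^\oplus_{r\mathbf 1}$ for each $r\ge0$ (i.e. $\|(\Gamma^\oplus_{r\mathbf 1})^n(s)-\sigma_*(r)\|\to0$ for every $s\in\ell^\infty_+(\mathcal I)$), then $\sigma_*$ is norm-continuous.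
   Context: Let $\mathcal I$ be a nonempty countable index set; $\ell^\infty_+(\mathcal I)$ is the cone of nonnegative real families $s=(s_i)_{i\in\mathcal I}$ with $\|s\|:=\sup_i|s_i|<\infty$, ordered componentwise; $\mathbf 1$ is the all-ones vector; $\oplus$ is the componentwise maximum, $\bigoplus$ the componentwise supremum of a bounded family. A sequence in $\ell^\infty(\mathcal I)$ converges weak$^*$ (viewing $\ell^\infty=(\ell^1)^*$) iff it is norm-bounded and converges componentwise. $\mathcal K_\infty$: continuous strictly increasing unbounded $\gamma:\mathbb R_+\to\mathbb R_+$ with $\gamma(0)=0$. For $\mathcal J\subset\mathcal I$, $s_{|\mathcal J}$ agrees with $s$ on $\mathcal J$ and is $0$ elsewhere. Gain operator: for each $i$ a finite (possibly empty) $\mathcal I_i\subset\mathcal I\setminus\{i\}$; directed graph $\mathcal G$ with vertices $\mathcal I$ and edges $ji$, $j\in\mathcal I_i$; a pointwise equicontinuous family $\gamma_{ij}\in\mathcal K_\infty$ ($ji\in E(\mathcal G)$); functions $\mu_i:\ell^\infty_+(\mathcal I)\to[0,\infty]$ with (M1) some $\xi\in\mathcal K_\infty$ has $\mu_i(0)=0$, $\mu_i(s)\ge\xi(\|s\|)$; (M2) $\mu_i$ monotone; (M3) for each finite $\mathcal J$, $\mu_i$ restricted to vectors vanishing off $\mathcal J$ is finite-valued and continuous; (M4) for each norm-bounded $A$ and $\varepsilon>0$ there is $\delta>0$ with $\sup_i|\mu_i(s_{|\mathcal I_i})-\mu_i(s^0_{|\mathcal I_i})|\le\varepsilon$ whenever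 $s^0\in A$, $\|s-s^0\|\le\delta$. $\Gamma_i(s):=\mu_i([\gamma_{ij}(s_j)]_{j\in\mathcal I_i})$ (argument zero outside $\mathcal I_i$). $\hat\Gamma(s):=s\oplus\Gamma(s)$ and $\Gamma^\oplus_b(s):=b\oplus\Gamma(s)$. $\oplus$-MBI property: there is $\varphi\in\mathcal K_\infty$ such that for all $s,b$, $s\le b\oplus\Gamma(s)$ implies $\|s\|\le\varphi(\|b\|)$. *)

From HB Require Import structures.
From mathcomp Require Import all_boot all_order all_algebra.
From mathcomp Require Import all_classical all_reals all_analysis.
Set Implicit Arguments. Unset Strict Implicit. Unset Printing Implicit Defensive.
Import Order.TTheory GRing.Theory Num.Theory.
Import numFieldNormedType.Exports.
Local Open Scope classical_set_scope.
Local Open Scope ring_scope.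

Section Defs.
Variables (R : realType) (I : countType).

(* elements of l^infty_+(I) are represented by s : I -> R with this predicate *)
Definition linf_plus (s : I -> R) : Prop :=
  (forall i, 0 <= s i) /\ exists M : R, forall i, `|s i| <= M.

Definition supnorm (s : I -> R) : R := sup (range (fun i => `|s i|)).

Definition restr (J : seq I) (s : I -> R) : I -> R :=
  fun i => if i \in J then s i else 0.

Definition vanishes_off (J : seq I) (s : I -> R) : Prop :=
  forall i, i \notin J -> s i = 0.

(* class K_infty of functions R_+ -> R_+ (represented on R) *)
Definition Kinf (g : R -> R) : Prop :=
  [/\ g 0 = 0,
      {within [set x : R | 0 <= x], continuous g},
      (forall x y, 0 <= x -> x < y -> g x < g y) &
      (forall M, exists x, 0 <= x /\ M < g x)].

Definition Gam (Ii : I -> seq I) (gam : I -> I -> R -> R)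
    (mu : I -> (I -> R) -> \bar R) (s : I -> R) : I -> R :=
  fun i => fine (mu i (fun j => if j \in Ii i then gam i j (s j) else 0)).

Definition hatGam Ii gam mu (s : I -> R) : I -> R :=
  fun i => Num.max (s i) (Gam Ii gam mu s i).

Definition Gamb Ii gam mu (b s : I -> R) : I -> R :=
  fun i => Num.max (b i) (Gam Ii gam mu s i).

Definition sigma_star Ii gam mu (r : R) : I -> R :=
  fun i => sup (range (fun n : nat => iter n (hatGam Ii gam mu) (fun _ => r) i)).

Definition is_gain_operator (Ii : I -> seq I) (gam : I -> I -> R -> R)
    (mu : I -> (I -> R) -> \bar R) : Prop :=
  [/\
      (forall i, i \notin Ii i),
      (forall i j, j \in Ii i -> Kinf (gam i j)),
      (forall r : R, 0 <= r -> forall eps : R, 0 < eps -> exists2 delta : R, 0 < delta &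
         forall i j, j \in Ii i -> forall r', 0 <= r' -> `|r - r'| < delta ->
           `|gam i j r - gam i j r'| < eps),
      (exists xi, Kinf xi /\ (forall i, (mu i (fun _ => 0) = 0%E) /\
         (forall s, linf_plus s -> ((xi (supnorm s))%:E <= mu i s)%E))) &
   [/\
      (forall i s s', linf_plus s -> linf_plus s' -> (forall j, s j <= s' j) ->
         (mu i s <= mu i s')%E),
      (forall i (J : seq I),
         (forall s, linf_plus s -> vanishes_off J s -> mu i s \is a fin_num) /\
         (forall s, linf_plus s -> vanishes_off J s ->
            forall eps : R, 0 < eps -> exists2 delta : R, 0 < delta &
            forall s', linf_plus s' -> vanishes_off J s' ->
              supnorm (fun j => s' j - s j) <= delta ->
              `|fine (mu i s') - fine (mu i s)| < eps)) &
      (forall A : set (I -> R), A `<=` linf_plus ->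
         (exists M : R, forall s, A s -> supnorm s <= M) ->
         forall eps : R, 0 < eps -> exists2 delta : R, 0 < delta &
         forall s0 s, A s0 -> linf_plus s -> supnorm (fun j => s j - s0 j) <= delta ->
           forall i, (`|mu i (restr (Ii i) s) - mu i (restr (Ii i) s0)| <= eps%:E)%E)]].

Definition oplus_MBI Ii gam mu : Prop :=
  exists phi, Kinf phi /\
    forall s b, linf_plus s -> linf_plus b ->
      (forall i, s i <= Gamb Ii gam mu b s i) -> supnorm s <= phi (supnorm b).

End Defs.

(* sigma_*(r) is the supremum of the nondecreasing iterates hatGamma^n(r 1), which
   the MBI property bounds by phi(r); hence sigma_* is nondecreasing and bounded on
   bounded sets.  By the equicontinuity of the gamma_ij and (M4), Gamma is uniformly
   continuous on bounded sets, so every finite iterate (Gamma^(+)_(r 1))^n(x) depends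
   continuously on r, uniformly in the component.  Since sigma_*(r) is approximated
   from below by the iterates started at 0, each sigma_*i is lower semicontinuous.
   The right limit u of sigma_* at r is again a bounded fixed point of
   Gamma^(+)_(r 1), because Gamma_i only reads the finitely many components in I_i;
   so u = sigma_*(r) when the fixed point is unique.  Under global attractivity,
   sigma_*(r') is squeezed between the N-th iterates started at 0 and at
   sigma_*(r + 1), which are uniformly close to sigma_*(r) for r' near r and N large. *)

From HB Require Import structures.
From mathcomp Require Import all_boot all_order all_algebra.
From mathcomp Require Import all_classical all_reals all_analysis.
From mathcomp Require Import lra.
Import Order.TTheory GRing.Theory Num.Theory.
Import numFieldNormedType.Exports.
Local Open Scope classical_set_scope.
Local Open Scope ring_scope.
Set Implicit Arguments. Unset Strict Implicit. Unset Printing Implicit Defensive.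

Section Supnorm.
Variables (R : realType) (I : countType).
Implicit Types (s a b : I -> R) (M : R).

Lemma ler_supnorm s M i : (forall j, `|s j| <= M) -> `|s i| <= supnorm s.
Proof.
move=> sM; apply: sup_upper_bound; last by exists i.
by split; [exists `|s i|, i | exists M => _ [j _ <-]].
Qed.

Lemma ler_supnormB a b M i :
  (forall j, 0 <= a j <= M) -> (forall j, 0 <= b j <= M) ->
  `|a i - b i| <= supnorm (fun j => a j - b j).
Proof.
move=> aM bM; apply: (ler_supnorm (M := M)) => j.
move: (aM j) (bM j) => /andP[? ?] /andP[? ?].
by rewrite ler_norml; apply/andP; split; lra.
Qed.

Definition nonneg s := forall i, 0 <= s i.

Lemma linf_plus_ub s M : nonneg s -> (forall i, s i <= M) -> linf_plus s.
Proof. by move=> s0 sM; split => //; exists M => i; rewrite ger0_norm. Qed.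

Lemma vanishes_off_bounded (J : seq I) s : vanishes_off J s ->
  exists M, forall i, `|s i| <= M.
Proof.
move=> sJ; exists (\big[Num.max/0]_(j <- J) `|s j|) => i.
have [iJ|/sJ ->] := boolP (i \in J).
  exact: (le_bigmax_seq _ _ xpredT (fun j => `|s j|) iJ).
by rewrite normr0 bigmax_ge_id.
Qed.

Hypothesis I_inhabited : inhabited I.

Lemma supnorm_le s M : (forall i, `|s i| <= M) -> supnorm s <= M.
Proof.
move=> sM; apply: ge_sup; first by case: I_inhabited => i; exists `|s i|, i.
by move=> _ [j _ <-].
Qed.

Lemma supnorm_cst M : 0 <= M -> supnorm (fun _ : I => M) = M.
Proof.
move=> M0; apply/le_anti/andP; split; first by apply: supnorm_le => i; rewrite ger0_norm.
case: I_inhabited => i; rewrite -{1}(ger0_norm M0).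
by apply: (ler_supnorm (M := M) i) => j; rewrite ger0_norm.
Qed.

End Supnorm.

Section RealFacts.
Variable R : realType.

Lemma Kinf_ge0 (g : R -> R) x : Kinf g -> 0 <= x -> 0 <= g x.
Proof.
case=> g0 _ gi _; rewrite le0r => /predU1P[->|x0]; first by rewrite g0.
by rewrite -g0 ltW // gi.
Qed.

Lemma Kinf_le (g : R -> R) x y : Kinf g -> 0 <= x -> x <= y -> g x <= g y.
Proof.
case=> _ _ gi _ x0; rewrite le_eqVlt => /predU1P[->//|xy].
by rewrite ltW // gi.
Qed.

Lemma dist_max_le (a b c d e : R) : `|a - c| <= e -> `|b - d| <= e ->
  `|Num.max a b - Num.max c d| <= e.
Proof.
rewrite !ler_norml => /andP[? ?] /andP[? ?].
by have [ab|ab] := leP a b; have [cd|cd] := leP c d; apply/andP; split; lra.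
Qed.

Lemma cvg_max {T : Type} {F : set_system T} {FF : Filter F} (u v : T -> R) a b :
  u @ F --> a -> v @ F --> b -> (fun t => Num.max (u t) (v t)) @ F --> Num.max a b.
Proof.
move=> ua vb; under eq_fun do rewrite maxr_absE; rewrite maxr_absE.
apply: cvgM; last exact: cvg_cst.
by apply: cvgD; [exact: cvgD | apply: cvg_norm; exact: cvgB].
Qed.

Lemma near_all_in {T : Type} {F : set_system T} {FF : Filter F} (K : eqType)
    (l : seq K) (P : K -> T -> Prop) :
  (forall k, k \in l -> \forall t \near F, P k t) ->
  \forall t \near F, forall k, k \in l -> P k t.
Proof.
elim: l => [|a l IH] Pl; first exact: nearW.
apply: filterS (filterI (Pl a (mem_head _ _)) (IH _)) => [t [Pa Pl'] k|k kl].
  by rewrite in_cons => /predU1P[->|]; [exact: Pa | exact: Pl'].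
by apply: Pl; rewrite in_cons kl orbT.
Qed.

Lemma fine_dist_le (a b : \bar R) (e : R) : a \is a fin_num -> b \is a fin_num ->
  (`|a - b| <= e%:E)%E -> `|fine a - fine b| <= e.
Proof. by case: a => // a; case: b => // b _ _; rewrite -EFinB abse_EFin lee_fin. Qed.

End RealFacts.

Section UniformEquicontinuity.
Variables (R : realType) (K : Type) (A : set K) (f : K -> R -> R).
Hypothesis f_equicont : forall r, 0 <= r -> forall eps, 0 < eps ->
  exists2 d, 0 < d & forall k, A k -> forall r', 0 <= r' -> `|r - r'| < d ->
    `|f k r - f k r'| < eps.

Lemma equicontinuous_uniform (C eps : R) : 0 < eps -> exists2 d, 0 < d &
  forall k, A k -> forall x y, 0 <= x -> x <= C -> 0 <= y -> `|x - y| < d ->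
    `|f k x - f k y| < eps.
Proof.
(* The set of [c] up to which the family is uniformly [eps]-equicontinuous is an
   interval; equicontinuity at its supremum [cs] pushes it beyond [cs]. *)
move=> e0; pose P c := exists2 d, 0 < d & forall k, A k ->
  forall x y, 0 <= x -> x <= c -> 0 <= y -> `|x - y| < d -> `|f k x - f k y| < eps.
apply: contrapT => nPC; rewrite -/(P C) in nPC.
have P_le c c' : c' <= c -> P c -> P c'.
  move=> c'c [d d0 Pd]; exists d => // k Ak x y x0 xc'.
  by apply: Pd => //; exact: le_trans c'c.
pose S := [set c | 0 <= c /\ P c].
have S0 : S 0.
  split => //; have [d d0 Pd] := f_equicont (lexx 0) e0.
  exists d => // k Ak x y x0 x_le0; have -> : x = 0 by apply/le_anti/andP.
  exact: Pd.
have S_le c : S c -> c <= C.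
  by move=> [_ Pc]; rewrite leNgt; apply/negP => /ltW Cc; exact/nPC/(P_le _ _ Cc).
have supS : has_sup S by split; [exists 0 | exists C].
set cs := sup S.
have cs0 : 0 <= cs by exact: sup_upper_bound.
have [ds ds0 Pcs] := f_equicont cs0 (ltac:(lra) : 0 < eps / 2).
have [c [_ [dc dc0 Pc]] csc] := sup_adherent (ltac:(lra) : 0 < ds / 2) supS.
rewrite -/cs in csc.
suff /(sup_upper_bound supS) : S (cs + ds / 4) by rewrite -/cs; lra.
split; first lra.
exists (Num.min dc (ds / 4)); first by rewrite lt_min dc0; lra.
move=> k Ak x y x0 xcs y0; rewrite lt_min => /andP[xydc xyds].
have [xc|cx] := leP x c; first exact: Pc.
have /(Pcs k Ak x x0) : `|cs - x| < ds by rewrite ltr_norml; apply/andP; split; lra.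
have /(Pcs k Ak y y0) : `|cs - y| < ds.
  by move: xyds; rewrite !ltr_norml => /andP[? ?]; apply/andP; split; lra.
move=> ycs; rewrite distrC => xcs'.
by rewrite (le_lt_trans (ler_distD (f k cs) _ _)) //; lra.
Qed.

Hypothesis f0 : forall k, A k -> f k 0 = 0.

Lemma equicontinuous_bounded (C : R) : exists2 B, 0 <= B & forall k, A k ->
  forall x, 0 <= x -> x <= C -> `|f k x| <= B.
Proof.
have [d d0 Pd] := equicontinuous_uniform C ltr01.
have walk k n h : A k -> 0 <= h < d -> n%:R * h <= C -> `|f k (n%:R * h)| <= n%:R.
  move=> Ak /andP[h0 hd]; elim: n => [|n IH]; first by rewrite mul0r f0 ?normr0.
  rewrite -natr1 mulrDl mul1r => nhC.
  have nh0 : 0 <= n%:R * h by rewrite mulr_ge0.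
  have step : `|f k (n%:R * h) - f k (n%:R * h + h)| < 1.
    apply: Pd => //; try lra.
    by rewrite opprD addrA subrr sub0r normrN ger0_norm.
  have := IH ltac:(lra); have := ler_distD (f k (n%:R * h)) 0 (f k (n%:R * h + h)).
  rewrite !sub0r !normrN; lra.
pose N := (Num.Def.archi_bound (`|C| / d)).+1.
have N0 : 0 < N%:R :> R by rewrite ltr0n.
have CN : `|C| < N%:R * d.
  rewrite -ltr_pdivrMr //; apply: (lt_le_trans (archi_boundP _)); last by rewrite ler_nat.
  by rewrite divr_ge0 // ltW.
exists N%:R => // k Ak x x0 xC.
have := walk k N (x / N%:R) Ak; rewrite [_ * (x / _)]mulrC divfK ?gt_eqF //; apply => //.
rewrite divr_ge0 ?(ltW N0) //= ltr_pdivrMr //.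
by rewrite mulrC (le_lt_trans _ CN) // (le_trans xC) // ler_norm.
Qed.

End UniformEquicontinuity.

Section GainOperator.
Variables (R : realType) (I : countType) (Ii : I -> seq I) (gam : I -> I -> R -> R)
  (mu : I -> (I -> R) -> \bar R).
Hypothesis I_inhabited : inhabited I.
Hypothesis gain : is_gain_operator Ii gam mu.
Variable phi : R -> R.
Hypothesis phi_Kinf : Kinf phi.
Hypothesis mbi : forall s b, linf_plus s -> linf_plus b ->
  (forall i, s i <= Gamb Ii gam mu b s i) -> supnorm s <= phi (supnorm b).

Local Notation G := (Gam Ii gam mu).
Local Notation T r := (Gamb Ii gam mu (fun _ => r)).
Local Notation hs r n := (iter n (hatGam Ii gam mu) (fun _ => r)).
Local Notation sig := (sigma_star Ii gam mu).

Let gam_Kinf i j : j \in Ii i -> Kinf (gam i j).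
Proof. by case: gain => _ + _ _ _; apply. Qed.

Let edge_equicont r : 0 <= r -> forall eps, 0 < eps -> exists2 d, 0 < d &
  forall p : I * I, p.2 \in Ii p.1 -> forall r', 0 <= r' -> `|r - r'| < d ->
    `|gam p.1 p.2 r - gam p.1 p.2 r'| < eps.
Proof.
case: gain => _ _ equi _ _ r0 eps e0; have [d d0 Pd] := equi r r0 eps e0.
by exists d => // -[i j] /= ji; exact: Pd.
Qed.

Let gam_unif_equicont (C eps : R) : 0 < eps -> exists2 d, 0 < d &
  forall i j, j \in Ii i -> forall x y, 0 <= x -> x <= C -> 0 <= y -> `|x - y| < d ->
    `|gam i j x - gam i j y| < eps.
Proof.
move=> e0; have [d d0 Pd] := equicontinuous_uniform edge_equicont C e0.
by exists d => // i j ji; exact: (Pd (i, j)).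
Qed.

Let gam_bounded (C : R) : exists2 B, 0 <= B & forall i j, j \in Ii i ->
  forall x, 0 <= x -> x <= C -> `|gam i j x| <= B.
Proof.
have f0 (p : I * I) : p.2 \in Ii p.1 -> gam p.1 p.2 0 = 0 by move=> /gam_Kinf[].
have [B B0 PB] := equicontinuous_bounded edge_equicont f0 C.
by exists B => // i j ji; exact: (PB (i, j)).
Qed.

Let mu_le i s s' : linf_plus s -> linf_plus s' -> (forall j, s j <= s' j) ->
  (mu i s <= mu i s')%E.
Proof. by case: gain => _ _ _ _ [+ _ _]; apply. Qed.

Let mu_fin i (J : seq I) s : linf_plus s -> vanishes_off J s -> mu i s \is a fin_num.
Proof. by case: gain => _ _ _ _ [_ /(_ i J)[+ _] _]; apply. Qed.

Let mu_unif (A : set (I -> R)) : A `<=` @linf_plus R I ->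
  (exists M, forall s, A s -> supnorm s <= M) ->
  forall eps, 0 < eps -> exists2 d, 0 < d &
  forall s0 s, A s0 -> linf_plus s -> supnorm (fun j => s j - s0 j) <= d ->
    forall i, (`|mu i (restr (Ii i) s) - mu i (restr (Ii i) s0)| <= eps%:E)%E.
Proof. by case: gain => _ _ _ _ [_ _]; apply. Qed.

Definition gam_vec i (x : I -> R) : I -> R :=
  fun j => if j \in Ii i then gam i j (x j) else 0.

Lemma GamE x i : G x i = fine (mu i (gam_vec i x)). Proof. by []. Qed.

Lemma gam_vec_ge0 i x : nonneg x -> nonneg (gam_vec i x).
Proof.
move=> x0 j; rewrite /gam_vec; case: ifP => // ji.
exact: Kinf_ge0 (gam_Kinf ji) (x0 j).
Qed.

Lemma linf_plus_gam_vec i x : nonneg x -> linf_plus (gam_vec i x).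
Proof.
move=> x0; split; first exact: gam_vec_ge0.
by apply: (vanishes_off_bounded (J := Ii i)) => j /negbTE ji; rewrite /gam_vec ji.
Qed.

Lemma fin_mu_gam_vec i x : nonneg x -> mu i (gam_vec i x) \is a fin_num.
Proof.
move=> x0; apply: (@mu_fin i (Ii i) _ (linf_plus_gam_vec i x0)) => j /negbTE ji.
by rewrite /gam_vec ji.
Qed.

Lemma Gam_le x y i : nonneg x -> (forall j, x j <= y j) -> G x i <= G y i.
Proof.
move=> x0 xy; have y0 : nonneg y by move=> j; exact: le_trans (x0 j) (xy j).
rewrite !GamE fine_le ?fin_mu_gam_vec //.
apply: mu_le; [exact: linf_plus_gam_vec | exact: linf_plus_gam_vec | move=> j].
by rewrite /gam_vec; case: ifP => // ji; exact: Kinf_le (gam_Kinf ji) (x0 j) (xy j).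
Qed.

Lemma Gamb_le r r' x y i : r <= r' -> nonneg x -> (forall j, x j <= y j) ->
  T r x i <= T r' y i.
Proof. by move=> rr' x0 xy; rewrite /Gamb ge_max !le_max rr' Gam_le ?orbT. Qed.

Lemma subsolution_le_phi r s : 0 <= r -> nonneg s -> (exists M, forall i, s i <= M) ->
  (forall i, s i <= T r s i) -> forall i, s i <= phi r.
Proof.
move=> r0 s0 [M sM] sTs i.
have r_linf : linf_plus (fun _ : I => r) by exact: (linf_plus_ub (M := r)).
have := mbi (linf_plus_ub s0 sM) r_linf sTs; rewrite supnorm_cst //.
apply: le_trans; rewrite -[s i]ger0_norm //.
by apply: (ler_supnorm (M := M)) => j; rewrite ger0_norm.
Qed.

(* Truncating [s'] at [phi r + 1] makes it bounded, so that the MBI property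
   applies to it. *)
Lemma subsolution_step_le_phi r s s' : 0 <= r -> nonneg s ->
  (forall i, s i <= phi r) -> (forall i, s i <= s' i) -> (forall i, s' i <= T r s i) ->
  forall i, s' i <= phi r.
Proof.
move=> r0 s0 s_phi ss' s'Ts; pose t i := Num.min (s' i) (phi r + 1).
have st i : s i <= t i by rewrite le_min ss' /=; have := s_phi i; lra.
have t0 : nonneg t by move=> i; exact: le_trans (s0 i) (st i).
have tTt i : t i <= T r t i.
  by rewrite (le_trans _ (Gamb_le _ (lexx r) s0 st)) // ge_min s'Ts.
have t_bounded : exists M, forall i, t i <= M.
  by exists (phi r + 1) => i; rewrite ge_min lexx orbT.
have t_phi := subsolution_le_phi r0 t0 t_bounded tTt.
by move=> i; have := t_phi i; rewrite /t ge_min => /orP[//|]; lra.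
Qed.

Lemma hat_iter_subsolution r n : 0 <= r ->
  [/\ forall i, r <= hs r n i, forall i, hs r n i <= T r (hs r n) i
    & forall i, hs r n i <= phi r].
Proof.
move=> r0; elim: n => [|n [r_s sTs s_phi]].
  have sTs i : r <= T r (fun _ => r) i by rewrite le_max lexx.
  by split=> // i; apply: subsolution_le_phi => //; exists r.
have s0 : nonneg (hs r n) by move=> i; exact: le_trans r0 (r_s i).
have ss' i : hs r n i <= hs r n.+1 i by rewrite iterS le_max lexx.
have s'Ts i : hs r n.+1 i <= T r (hs r n) i.
  by rewrite iterS ge_max sTs le_max lexx orbT.
split=> i; first exact: le_trans (r_s i) (ss' i).
  exact: le_trans (s'Ts i) (Gamb_le _ (lexx r) s0 ss').
exact: subsolution_step_le_phi s0 s_phi ss' s'Ts i.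
Qed.

Lemma hat_iter_le r r' n i : 0 <= r -> r <= r' -> hs r n i <= hs r' n i.
Proof.
move=> r0 rr'; elim: n i => [//|n IH] i.
have [r_s _ _] := hat_iter_subsolution n r0.
rewrite !iterS ge_max !le_max IH Gam_le ?orbT //.
by move=> j; exact: le_trans r0 (r_s j).
Qed.

Lemma has_sup_hat_iter r i : 0 <= r -> has_sup (range (fun n => hs r n i)).
Proof.
move=> r0; split; first by exists r, 0%N.
by exists (phi r) => _ [n _ <-]; have [_ _] := hat_iter_subsolution n r0; apply.
Qed.

Lemma hat_iter_le_sigma_star r n i : 0 <= r -> hs r n i <= sig r i.
Proof. by move=> r0; apply: sup_upper_bound; [exact: has_sup_hat_iter | exists n]. Qed.

Lemma sigma_star_ge r i : 0 <= r -> r <= sig r i.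
Proof. exact: (hat_iter_le_sigma_star 0). Qed.

Lemma sigma_star_ge0 r : 0 <= r -> nonneg (sig r).
Proof. by move=> r0 i; exact: le_trans r0 (sigma_star_ge i r0). Qed.

Lemma sigma_star_le_phi r i : 0 <= r -> sig r i <= phi r.
Proof.
move=> r0; apply: ge_sup; first by exists r, 0%N.
by move=> _ [n _ <-]; have [_ _] := hat_iter_subsolution n r0; apply.
Qed.

Lemma linf_plus_sigma_star r : 0 <= r -> linf_plus (sig r).
Proof.
by move=> r0; apply: (linf_plus_ub (sigma_star_ge0 r0)) => i; exact: sigma_star_le_phi.
Qed.

Lemma supnorm_sigma_star_le r : 0 <= r -> supnorm (sig r) <= phi r.
Proof.
move=> r0; apply: (supnorm_le I_inhabited) => i.
by rewrite ger0_norm ?sigma_star_ge0 ?sigma_star_le_phi.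
Qed.

Lemma sigma_star_le r r' i : 0 <= r -> r <= r' -> sig r i <= sig r' i.
Proof.
move=> r0 rr'; apply: ge_sup; first by exists r, 0%N.
move=> _ [n _ <-]; apply: le_trans (hat_iter_le_sigma_star n i (le_trans r0 rr')).
exact: hat_iter_le.
Qed.

Lemma restr_gam_vec i x : restr (Ii i) (gam_vec i x) = gam_vec i x.
Proof. by apply: funext => j; rewrite /restr /gam_vec; case: (j \in Ii i). Qed.

Lemma Gam_unif (C eps : R) : 0 < eps -> exists2 d, 0 < d & forall i x y,
  nonneg x -> nonneg y -> (forall j, x j <= C) -> (forall j, y j <= C) ->
  (forall j, j \in Ii i -> `|x j - y j| < d) -> `|G x i - G y i| <= eps.
Proof.
move=> e0; have [B B0 PB] := gam_bounded C.
pose A := [set s : I -> R | nonneg s /\ forall j, s j <= B].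
have A_linf : A `<=` @linf_plus R I by move=> s [s0 sB]; exact: linf_plus_ub s0 sB.
have A_bounded : exists M, forall s, A s -> supnorm s <= M.
  by exists B => s [s0 sB]; apply: (supnorm_le I_inhabited) => j; rewrite ger0_norm.
have [dA dA0 PA] := mu_unif A_linf A_bounded e0.
have [d d0 Pd] := gam_unif_equicont C dA0.
exists d => // i x y x0 y0 xC yC xy.
have Ay : A (gam_vec i y).
  split=> [|j]; first exact: gam_vec_ge0.
  rewrite /gam_vec; case: ifP => // ji.
  exact: le_trans (ler_norm _) (PB _ _ ji _ (y0 j) (yC j)).
have xy_dA : supnorm (fun j => gam_vec i x j - gam_vec i y j) <= dA.
  apply: (supnorm_le I_inhabited) => j; rewrite /gam_vec; case: ifP => ji.
    exact: ltW (Pd _ _ ji _ _ (x0 j) (xC j) (y0 j) (xy j ji)).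
  by rewrite subr0 normr0 ltW.
have := PA _ _ Ay (linf_plus_gam_vec i x0) xy_dA i; rewrite !restr_gam_vec.
by apply: fine_dist_le; exact: fin_mu_gam_vec.
Qed.

Lemma Gam_cvg (x_ : nat -> I -> R) x C i :
  (forall n, nonneg (x_ n)) -> nonneg x -> (forall n j, x_ n j <= C) ->
  (forall j, x j <= C) -> (forall j, (fun n => x_ n j) @ \oo --> x j) ->
  (fun n => G (x_ n) i) @ \oo --> G x i.
Proof.
move=> x_0 x0 x_C xC x_x; apply/cvgrPdist_le => e e0.
have [d d0 Pd] := Gam_unif C e0.
have x_near : \forall n \near \oo, forall j, j \in Ii i -> `|x j - x_ n j| < d.
  by apply: near_all_in => j _; exact: cvgr_dist_lt.
by apply: filterS x_near => n xn; apply: Pd.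
Qed.

Lemma hat_iter_le_iter_Gamb r n i : 0 <= r ->
  hs r n i <= iter n.+1 (T r) (fun _ => 0) i.
Proof.
move=> r0; elim: n i => [|n IH] i; first by rewrite /= le_max lexx.
have [r_s sTs _] := hat_iter_subsolution n r0.
have s0 : nonneg (hs r n) by move=> j; exact: le_trans r0 (r_s j).
rewrite iterS [in X in _ <= X]iterS ge_max; apply/andP; split.
  exact: le_trans (sTs i) (Gamb_le _ (lexx r) s0 IH).
by rewrite le_max Gam_le ?orbT.
Qed.

Lemma iter_Gamb_ge0 r x n : 0 <= r -> nonneg x -> nonneg (iter n (T r) x).
Proof. by move=> r0 x0; case: n => [|n] //= i; rewrite le_max r0. Qed.

Lemma iter_Gamb_le r r' x y n i : 0 <= r -> r <= r' -> nonneg x ->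
  (forall j, x j <= y j) -> iter n (T r) x i <= iter n (T r') y i.
Proof.
move=> r0 rr' x0 xy; elim: n i => [//|n IH] i.
by rewrite !iterS; apply: Gamb_le => //; exact: iter_Gamb_ge0.
Qed.

Lemma sigma_star_bounded_seq (rn : nat -> R) (r : R) : (forall n, 0 <= rn n) ->
  rn @ \oo --> r -> exists M : R, forall n, supnorm (sig (rn n)) <= M.
Proof.
move=> rn0 rnr; have [M [_ PM]] := cvg_seq_bounded (cvgP _ rnr).
exists (phi (M + 1)) => n.
apply: le_trans (supnorm_sigma_star_le (rn0 n)) (Kinf_le phi_Kinf (rn0 n) _).
by rewrite (le_trans (ler_norm _)) //; apply: PM => //; lra.
Qed.

Section FixedPoint.
Hypothesis sigma_star_fix : forall r, 0 <= r -> T r (sig r) = sig r.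

Lemma iter_Gamb_sigma_star r n : 0 <= r -> iter n (T r) (sig r) = sig r.
Proof. by move=> r0; elim: n => [//|n IH]; rewrite iterS IH sigma_star_fix. Qed.

Lemma iter_Gamb_le_sigma_star r r' x n i : 0 <= r -> r <= r' -> nonneg x ->
  (forall j, x j <= sig r' j) -> iter n (T r) x i <= sig r' i.
Proof.
move=> r0 rr' x0 xs; rewrite -(iter_Gamb_sigma_star n (le_trans r0 rr')).
exact: iter_Gamb_le.
Qed.

Lemma iter_Gamb_cont r x n eps : 0 <= r -> nonneg x ->
  (forall j, x j <= sig (r + 1) j) -> 0 < eps -> exists2 d, 0 < d &
  forall r', 0 <= r' -> r' <= r + 1 -> `|r' - r| < d ->
    forall i, `|iter n (T r') x i - iter n (T r) x i| <= eps.
Proof.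
move=> r0 x0 xs; have r10 : 0 <= r + 1 by lra.
have iter_phi r' m j : 0 <= r' -> r' <= r + 1 -> iter m (T r') x j <= phi (r + 1).
  move=> r'0 r'r; apply: le_trans (sigma_star_le_phi j r10).
  exact: iter_Gamb_le_sigma_star.
elim: n eps => [|n IH] eps e0.
  by exists 1 => // r' _ _ _ i; rewrite subrr normr0 ltW.
have [dG dG0 PG] := Gam_unif (phi (r + 1)) e0.
have [dn dn0 Pn] := IH (dG / 2) ltac:(lra).
exists (Num.min dn eps); first by rewrite lt_min dn0.
move=> r' r'0 r'r; rewrite lt_min => /andP[r'dn r'e] i.
rewrite !iterS; apply: dist_max_le; first exact: ltW.
apply: PG => [||j|j|j _]; try exact: iter_Gamb_ge0.
- exact: iter_phi.
- by apply: iter_phi => //; lra.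
- by apply: le_lt_trans (Pn r' r'0 r'r r'dn j) _; lra.
Qed.

Lemma ler_supnorm_iter_Gamb r x n i : 0 <= r -> nonneg x ->
  (forall j, x j <= sig (r + 1) j) ->
  `|iter n (T r) x i - sig r i| <= supnorm (fun j => iter n (T r) x j - sig r j).
Proof.
move=> r0 x0 xU; have r10 : 0 <= r + 1 by lra.
apply: (ler_supnormB (M := phi (r + 1))) => j.
  rewrite iter_Gamb_ge0 //= (le_trans _ (sigma_star_le_phi j r10)) //.
  by apply: iter_Gamb_le_sigma_star => //; lra.
rewrite sigma_star_ge0 //= (le_trans _ (sigma_star_le_phi j r10)) //.
by rewrite sigma_star_le //; lra.
Qed.

Lemma sigma_star_lower_semicont r i eps : 0 <= r -> 0 < eps -> exists2 d, 0 < d &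
  forall r', 0 <= r' -> r' <= r -> r - d < r' -> sig r i - eps < sig r' i.
Proof.
move=> r0 e0.
have [_ [n _ <-]] := sup_adherent (ltac:(lra) : 0 < eps / 2) (has_sup_hat_iter i r0).
rewrite -/(sig r i) => sig_n.
have zero0 : nonneg (fun _ : I => 0 : R) by move=> j.
have [d d0 Pd] := iter_Gamb_cont n.+1 r0 zero0 (sigma_star_ge0 (r := r + 1) ltac:(lra))
  (ltac:(lra) : 0 < eps / 2).
exists d => // r' r'0 r'r rd.
have /(_ i) := Pd r' r'0 ltac:(lra) ltac:(rewrite ltr_norml; apply/andP; split; lra).
have := hat_iter_le_iter_Gamb n i r0.
have := iter_Gamb_le_sigma_star n.+1 i r'0 (lexx r') zero0 (sigma_star_ge0 r'0).
by rewrite ler_norml => ? ? /andP[? ?]; lra.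
Qed.

Section Uniqueness.
Hypothesis sigma_star_unique :
  forall r, 0 <= r -> forall s, linf_plus s -> T r s = s -> s = sig r.

Lemma sigma_star_right_cvg r i : 0 <= r ->
  (fun n => sig (r + harmonic n) i) @ \oo --> sig r i.
Proof.
move=> r0; pose q n := r + harmonic n.
have r_q n : r <= q n by rewrite lerDl harmonic_ge0.
have q0 n : 0 <= q n := le_trans r0 (r_q n).
have q_noninc : {homo q : m n / (m <= n)%N >-> n <= m}.
  by move=> m n mn; rewrite lerD2l lef_pV2 ?posrE // ler_nat ltnS.
have sq_noninc j : {homo (fun n => sig (q n) j) : m n / (m <= n)%N >-> n <= m}.
  by move=> m n mn; apply: sigma_star_le; [exact: q0 | exact: q_noninc].
have sq_lb j : has_lbound (range (fun n => sig (q n) j)).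
  by exists (sig r j) => _ [n _ <-]; exact: sigma_star_le.
pose u j := inf (range (fun n => sig (q n) j)).
have sq_u j : (fun n => sig (q n) j) @ \oo --> u j.
  exact: nonincreasing_cvgn (sq_noninc j) (sq_lb j).
have sig_u j : sig r j <= u j.
  apply: lb_le_inf; first by exists (sig (q 0%N) j), 0%N.
  by move=> _ [n _ <-]; exact: sigma_star_le.
have sq_C n j : sig (q n) j <= phi (q 0%N).
  apply: le_trans (sigma_star_le_phi j (q0 0%N)).
  exact: sigma_star_le (q0 n) (q_noninc 0%N n (leq0n n)).
have u_C j : u j <= phi (q 0%N).
  by apply: le_trans (sq_C 0%N j); apply: (ge_inf (sq_lb j)); exists 0%N.
have u0 : nonneg u by move=> j; exact: le_trans (sigma_star_ge0 r0 j) (sig_u j).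
have Tu : T r u = u.
  apply: funext => k; suff Tu_k : (fun n => sig (q n) k) @ \oo --> T r u k.
    by apply: (cvg_unique _ Tu_k (sq_u k)).
  have -> : (fun n => sig (q n) k) = (fun n => Num.max (q n) (G (sig (q n)) k)).
    by apply: funext => n; rewrite -[in LHS](sigma_star_fix (q0 n)).
  apply: cvg_max; last exact: Gam_cvg (fun n => sigma_star_ge0 (q0 n)) u0 sq_C u_C sq_u.
  by rewrite -[X in _ --> X]addr0; apply: cvgD; [exact: cvg_cst | exact: cvg_harmonic].
by rewrite -(sigma_star_unique r0 (linf_plus_ub u0 u_C) Tu); exact: sq_u.
Qed.

Lemma sigma_star_upper_semicont r i eps : 0 <= r -> 0 < eps -> exists2 d, 0 < d &
  forall r', r <= r' -> r' < r + d -> sig r' i < sig r i + eps.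
Proof.
move=> r0 e0; have [N _ PN] := cvgr_dist_lt _ _ (sigma_star_right_cvg (i := i) r0) _ e0.
exists (harmonic N) => [|r' rr' r'N]; first exact: harmonic_gt0.
apply: le_lt_trans (sigma_star_le i (le_trans r0 rr') (ltW r'N)) _.
by have := PN N (leqnn N); rewrite ltr_norml => /andP[? ?]; lra.
Qed.

Lemma sigma_star_cont_at r i eps : 0 <= r -> 0 < eps -> exists2 d, 0 < d &
  forall r', 0 <= r' -> `|r' - r| < d -> `|sig r' i - sig r i| < eps.
Proof.
move=> r0 e0; have [dl dl0 Pl] := sigma_star_lower_semicont i r0 e0.
have [du du0 Pu] := sigma_star_upper_semicont i r0 e0.
exists (Num.min dl du) => [|r' r'0]; first by rewrite lt_min dl0.
rewrite lt_min !ltr_norml => /andP[/andP[? ?] /andP[? ?]]; apply/andP.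
have [r'r|rr'] := leP r' r.
  by have := Pl r' r'0 r'r ltac:(lra); have := sigma_star_le i r'0 r'r; split; lra.
by have := Pu r' (ltW rr') ltac:(lra); have := sigma_star_le i r0 (ltW rr'); split; lra.
Qed.

Lemma sigma_star_continuous i :
  {within [set r : R | 0 <= r], continuous (fun r => sig r i)}.
Proof.
apply/subspace_continuousP => r r0; apply/cvgrPdist_lt => e e0.
rewrite near_withinE; have [d d0 Pd] := sigma_star_cont_at i r0 e0.
apply/nbhs_ballP; exists d => // r' rr' r'0.
by rewrite distrC Pd //; move: rr'; rewrite /ball /= distrC.
Qed.

Lemma sigma_star_cvg (rn : nat -> R) (r : R) i : (forall n, 0 <= rn n) -> 0 <= r ->
  rn @ \oo --> r -> (fun n => sig (rn n) i) @ \oo --> sig r i.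
Proof.
move=> rn0 r0 rnr; apply/cvgrPdist_lt => e e0.
have [d d0 Pd] := sigma_star_cont_at i r0 e0.
by apply: filterS (cvgr_dist_lt _ _ rnr _ d0) => n rnd; rewrite distrC Pd // distrC.
Qed.

End Uniqueness.

Lemma sigma_star_norm_cont r eps :
  (forall s, linf_plus s ->
    (fun n => supnorm (fun i => iter n (T r) s i - sig r i)) @ \oo --> (0 : R)) ->
  0 <= r -> 0 < eps -> exists2 d, 0 < d &
  forall r', 0 <= r' -> `|r' - r| < d -> supnorm (fun i => sig r' i - sig r i) < eps.
Proof.
move=> attract r0 e0; have r10 : 0 <= r + 1 by lra.
pose U := sig (r + 1); have U0 : nonneg U := sigma_star_ge0 r10.
have zero0 : nonneg (fun _ : I => 0 : R) by move=> j.
have zero_U j : (fun _ : I => 0 : R) j <= U j by exact: U0.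
have zero_linf : linf_plus (fun _ : I => 0 : R) by exact: (linf_plus_ub (M := 0)).
have e4 : 0 < eps / 4 by lra.
have [N [N0 NU]] := filter_ex (filterI
  (cvgr_dist_lt _ _ (attract _ zero_linf) _ e4)
  (cvgr_dist_lt _ _ (attract _ (linf_plus_sigma_star r10)) _ e4)).
rewrite /= sub0r normrN in N0; rewrite /= sub0r normrN in NU.
have [d0 d00 P0] := iter_Gamb_cont N r0 zero0 zero_U e4.
have [dU dU0 PU] := iter_Gamb_cont N r0 U0 (fun j => lexx _) e4.
exists (Num.min 1 (Num.min d0 dU)) => [|r' r'0]; first by rewrite !lt_min ltr01 d00.
rewrite !lt_min => /andP[r'1 /andP[r'd0 r'dU]].
have r'r : r' <= r + 1 by move: r'1; rewrite ltr_norml => /andP[_ ?]; lra.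
apply: (@le_lt_trans _ _ (eps / 2)); last lra.
apply: (supnorm_le I_inhabited) => i.
have close0 := le_lt_trans (ler_supnorm_iter_Gamb N i r0 zero0 zero_U)
  (le_lt_trans (ler_norm _) N0).
have closeU := le_lt_trans (ler_supnorm_iter_Gamb N i r0 U0 (fun j => lexx _))
  (le_lt_trans (ler_norm _) NU).
have lo := iter_Gamb_le_sigma_star N i r'0 (lexx r') zero0 (sigma_star_ge0 r'0).
have hi : sig r' i <= iter N (T r') U i.
  rewrite -{1}(iter_Gamb_sigma_star N r'0); apply: iter_Gamb_le => // [|j].
    exact: sigma_star_ge0.
  exact: sigma_star_le.
move: close0 closeU (P0 r' r'0 r'r r'd0 i) (PU r' r'0 r'r r'dU i).
rewrite !ltr_norml !ler_norml => /andP[? ?] /andP[? ?] /andP[? ?] /andP[? ?].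
by apply/andP; split; lra.
Qed.

End FixedPoint.

End GainOperator.

Unset Implicit Arguments.

Theorem proposition3p10 (R : realType) (I : countType) (HI : inhabited I)
    (Ii : I -> seq I) (gam : I -> I -> R -> R) (mu : I -> (I -> R) -> \bar R) :
  is_gain_operator Ii gam mu ->
  oplus_MBI Ii gam mu ->
  (* (a) *)
  ((forall r : R, 0 <= r ->
      Gamb Ii gam mu (fun _ => r) (sigma_star Ii gam mu r) = sigma_star Ii gam mu r /\
      forall s, linf_plus s -> Gamb Ii gam mu (fun _ => r) s = s ->
        s = sigma_star Ii gam mu r) ->
    (forall i : I, {within [set r : R | 0 <= r],
                     continuous (fun r => sigma_star Ii gam mu r i)}) /\
    (forall (rn : nat -> R) (r : R), (forall n, 0 <= rn n) -> 0 <= r ->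
       rn @ \oo --> r ->
       (exists M : R, forall n, supnorm (sigma_star Ii gam mu (rn n)) <= M) /\
       (forall i, (fun n => sigma_star Ii gam mu (rn n) i) @ \oo -->
                    sigma_star Ii gam mu r i))) /\
  (* (b) *)
  ((forall r : R, 0 <= r ->
      Gamb Ii gam mu (fun _ => r) (sigma_star Ii gam mu r) = sigma_star Ii gam mu r /\
      forall s, linf_plus s ->
        (fun n => supnorm (fun i => iter n (Gamb Ii gam mu (fun _ => r)) s i
                                    - sigma_star Ii gam mu r i)) @ \oo --> (0 : R)) ->
    forall r : R, 0 <= r -> forall eps : R, 0 < eps -> exists2 delta : R, 0 < delta &
      forall r', 0 <= r' -> `|r' - r| < delta ->
        supnorm (fun i => sigma_star Ii gam mu r' i - sigma_star Ii gam mu r i) < eps).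
Proof.
move=> gain [phi [phi_Kinf mbi]]; split=> [fix_unique | fix_attractive].
  have sfix (r : R) (r0 : 0 <= r) := (fix_unique r r0).1.
  have suniq (r : R) (r0 : 0 <= r) := (fix_unique r r0).2.
  split=> [i | rn r rn0 r0 rnr].
    exact: (sigma_star_continuous HI gain mbi sfix suniq (i := i)).
  split; first exact (sigma_star_bounded_seq HI gain phi_Kinf mbi rn0 rnr).
  by move=> i; exact (sigma_star_cvg HI gain mbi sfix suniq rn0 r0 rnr).
move=> r r0 eps e0; have sfix (r' : R) (r'0 : 0 <= r') := (fix_attractive r' r'0).1.
exact (sigma_star_norm_cont HI gain mbi sfix (fix_attractive r r0).2 r0 e0).
Qed.
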